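(* Let $\|\cdot\|$ be a strictly convex norm on $\mathbb{R}^n$ that is continuously differentiable on $\mathbb{R}^n\setminus\{0\}$. If $\|\cdot\|$ is doubling in the tangent plane, then $\|\cdot\|$ is doubling. Moreover, if $\|\cdot\|$ is doubling in the tangent plane and also geometrically convex in the tangent plane, then $\|\cdot\|$ is geometrically convex. Further, if $\|\cdot\|$ is doubling in the tangent plane and also balanced in the tangent plane, then it is balanced.
   Context: $N(x)$ denotes the gradient of $\|\cdot\|$ at $x\neq0$, $\langle\cdot,\cdot\rangle$ the Euclidean inner product, and $h(x,y)=\|y\|-\langle y,N(x)\rangle$ for $x\ne0$. Strict convexity: if $x,y\ne0$ and $\|x+y\|=\|x\|+\|y\|$ then $y=\alpha x$ for some $\alpha>0$. Definitions (each ''is P'' means ''is P with some constants''): - doubling (constants $T,r>0$): $h(x,x+2y)\le Th(x,x+y)$ for all $x\ne0$, $\|y\|\le r\|x\|$; - doubling in the tangent plane (constants $T,r>0$): the same inequality for all $x\neq0$, $\|y\|\le r\|x\|$ with $\langle y,N(x)\rangle=0$; - geometrically convex (constants $r>0$, $\Lambda>2$): $\Lambda h(x,x+y)\le h(x,x+2y)$ for all $x\ne0$, $\|y\|\le r\|x\|$; - geometrically convex in the tangent plane (constants $\Lambda>2$, $r>0$): $h(x,x+2y)\ge\Lambda h(x,x+y)$ for all $x\ne0$, $\|y\|\le r\|x\|$ with $\langle y,N(x)\rangle=0$; - balanced (constants $R>0$, $K\ge1$): $h(x,x+y)\le Kh(x,x-y)$ for all $x\neq0$, $\|y\|\le R\|x\|$;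 - balanced in the tangent plane (constants $r,K>0$): $h(x,x+y)\le Kh(x,x-y)$ for all $x\ne0$, $\|y\|\le r\|x\|$ with $\langle y,N(x)\rangle=0$. *)

From HB Require Import structures.
From mathcomp Require Import all_boot all_order all_algebra.
From mathcomp Require Import all_classical all_reals all_analysis.
Set Implicit Arguments. Unset Strict Implicit. Unset Printing Implicit Defensive.
Import Order.TTheory GRing.Theory Num.Theory.
Import numFieldNormedType.Exports.
Local Open Scope ring_scope.

Section Defs.
Variables (R : realType) (n : nat).
Implicit Types (x y : 'rV[R]_n).

Definition dotp x y : R := \sum_(i < n) x ord0 i * y ord0 i.

Definition is_norm (nrm : 'rV[R]_n -> R) : Prop :=
  [/\ forall x, 0 <= nrm x,
      forall x, nrm x = 0 -> x = 0,
      forall (a : R) x, nrm (a *: x) = `|a| * nrm x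
    & forall x y, nrm (x + y) <= nrm x + nrm y].

Definition strictly_convex (nrm : 'rV[R]_n -> R) : Prop :=
  forall x y, x != 0 -> y != 0 -> nrm (x + y) = nrm x + nrm y ->
    exists2 a : R, 0 < a & y = a *: x.

Definition is_gradient (nrm : 'rV[R]_n -> R) (N : 'rV[R]_n -> 'rV[R]_n) : Prop :=
  forall x, x != 0 -> differentiable nrm x /\ forall y, 'd nrm x y = dotp y (N x).

Definition C1_away_from_0 (nrm : 'rV[R]_n -> R) (N : 'rV[R]_n -> 'rV[R]_n) : Prop :=
  is_gradient nrm N /\ forall x, x != 0 -> {for x, continuous N}.

Definition hfun (nrm : 'rV[R]_n -> R) (N : 'rV[R]_n -> 'rV[R]_n) x y : R :=
  nrm y - dotp y (N x).

Variables (nrm : 'rV[R]_n -> R) (N : 'rV[R]_n -> 'rV[R]_n).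
Local Notation h := (hfun nrm N).

Definition doubling : Prop :=
  exists T r : R, [/\ 0 < T, 0 < r &
    forall x y, x != 0 -> nrm y <= r * nrm x -> h x (x + 2 *: y) <= T * h x (x + y)].

Definition doubling_tangent : Prop :=
  exists T r : R, [/\ 0 < T, 0 < r &
    forall x y, x != 0 -> nrm y <= r * nrm x -> dotp y (N x) = 0 ->
      h x (x + 2 *: y) <= T * h x (x + y)].

Definition geom_convex : Prop :=
  exists r L : R, [/\ 0 < r, 2 < L &
    forall x y, x != 0 -> nrm y <= r * nrm x -> L * h x (x + y) <= h x (x + 2 *: y)].

Definition geom_convex_tangent : Prop :=
  exists L r : R, [/\ 2 < L, 0 < r &
    forall x y, x != 0 -> nrm y <= r * nrm x -> dotp y (N x) = 0 ->
      L * h x (x + y) <= h x (x + 2 *: y)].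

Definition balanced : Prop :=
  exists Rc K : R, [/\ 0 < Rc, 1 <= K &
    forall x y, x != 0 -> nrm y <= Rc * nrm x -> h x (x + y) <= K * h x (x - y)].

Definition balanced_tangent : Prop :=
  exists r K : R, [/\ 0 < r, 0 < K &
    forall x y, x != 0 -> nrm y <= r * nrm x -> dotp y (N x) = 0 ->
      h x (x + y) <= K * h x (x - y)].

End Defs.

From HB Require Import structures.
From mathcomp Require Import all_boot all_order all_algebra all_classical all_reals all_analysis.
From mathcomp Require Import lra ring.
Import Order.TTheory GRing.Theory Num.Theory numFieldNormedType.Exports.
Local Open Scope ring_scope.
Set Implicit Arguments. Unset Strict Implicit.

(** For [x <> 0] the function [h x = nrm - <., N x>] is nonnegative, positively
    homogeneous and subadditive, and vanishes at [x].  Splitting [y = s x + w] with [w]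
    in the tangent plane at [x], homogeneity gives
    [h x (x + c y) = (1 + c s) f (c / (1 + c s))] for [f t = h x (x + t w)], a
    nonnegative convex function vanishing at [0].  The tangent-plane hypotheses are
    inequalities for [f] on a bounded interval, and for small [|s|] the full
    inequalities follow from them by convexity of [f] and its monotonicity on either
    side of [0]. *)

Definition chord_convex (R : realType) (f : R -> R) : Prop :=
  forall p q u, p <= q -> q <= u -> (u - p) * f q <= (u - q) * f p + (q - p) * f u.

Lemma chord_convexN (R : realType) (f : R -> R) :
  chord_convex f -> chord_convex (fun t => f (- t)).
Proof.
move=> f_cvx p q u pq qu.
have := f_cvx (- u) (- q) (- p); rewrite !opprK !lerN2 => /(_ qu pq).
by rewrite -!(addrC u) -!(addrC q) [X in _ <= X]addrC.
Qed.

Section ConvexThroughOrigin.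
Variables (R : realType) (f : R -> R).
Hypotheses (f_cvx : chord_convex f) (f0 : f 0 = 0) (f_ge0 : forall t, 0 <= f t).

Lemma convex0_slope_le p q : 0 <= p -> p <= q -> q * f p <= p * f q.
Proof. by move=> p0 pq; have := f_cvx p0 pq; rewrite f0 mulr0 add0r !subr0. Qed.

Lemma convex0_nondecr p q : 0 <= p -> p <= q -> f p <= f q.
Proof.
move=> p0 pq; have [->|pn0] := eqVneq p 0; first by rewrite f0.
have p_gt0 : 0 < p by rewrite lt_neqAle eq_sym pn0.
rewrite -(ler_pM2l p_gt0); apply: le_trans (convex0_slope_le p0 pq).
exact: ler_wpM2r.
Qed.

End ConvexThroughOrigin.

(* For [f t = h x (x + t *: w)], [(1 + c * s) * f (c / (1 + c * s))] is
   [h x (x + c *: (s *: x + w))] (see [hfun_shift]); for [|s| <= 1/4] every point at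
   which [f] is evaluated below lies in [[-3, 3]]. *)
Section Perspective.
Variables (R : realType) (f : R -> R) (T : R).
Hypotheses (f_cvx : chord_convex f) (f0 : f 0 = 0) (f_ge0 : forall t, 0 <= f t).
Hypotheses (T_gt0 : 0 < T) (f_dbl : forall t, `|t| <= 3 -> f (2 * t) <= T * f t).

Lemma convex0_nonincr p q : 0 <= p -> p <= q -> f (- p) <= f (- q).
Proof. by apply: (convex0_nondecr (chord_convexN f_cvx)); rewrite ?oppr0. Qed.

Lemma perspective_doubling s : `|s| <= 1/4 ->
  (1 + 2 * s) * f (2 / (1 + 2 * s)) <= 2 * T ^+ 2 * ((1 + s) * f (1 + s)^-1).
Proof.
rewrite ler_norml => /andP [s_lo s_hi].
have c1 : 0 < 1 + s by lra.
have c2 : 0 < 1 + 2 * s by lra.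
set a := (1 + s)^-1; set b := 2 / (1 + 2 * s).
have a_ge0 : 0 <= a by rewrite invr_ge0 ltW.
have a_le : a <= 4 / 3 by rewrite /a -div1r ler_pdivrMr //; lra.
have b_ge0 : 0 <= b by rewrite divr_ge0 // ltW.
have b_le : b <= 4 * a by rewrite /b /a ler_pdivrMr // mulrAC ler_pdivlMr //; lra.
have fb_le : f b <= T ^+ 2 * f a.
  apply: le_trans (convex0_nondecr f_cvx f0 f_ge0 b_ge0 b_le) _.
  rewrite (_ : 4 * a = 2 * (2 * a)); last by ring.
  apply: le_trans (f_dbl _) _; first by rewrite ger0_norm; lra.
  by rewrite expr2 -mulrA ler_pM2l // f_dbl // ger0_norm //; lra.
apply: (@le_trans _ _ (2 * (1 + s) * f b)); first by rewrite ler_wpM2r //; lra.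
rewrite [X in _ <= X](_ : _ = 2 * (1 + s) * (T ^+ 2 * f a)); last by ring.
by rewrite ler_wpM2l //; lra.
Qed.

Lemma perspective_geom_convex L r s :
  (forall t, `|t| <= 3 -> L * f t <= f (2 * t)) -> 2 <= L -> r <= 1/4 ->
  2 * L * r * T <= L - 2 -> `|s| <= r ->
  (L + 2) / 2 * ((1 + s) * f (1 + s)^-1) <= (1 + 2 * s) * f (2 / (1 + 2 * s)).
Proof.
move=> f_gc L_ge2 r_le rT_le; rewrite ler_norml => /andP [s_lo s_hi].
have c1 : 0 < 1 + s by lra.
have c2 : 0 < 1 + 2 * s by lra.
set a := (1 + s)^-1; set b := 2 / (1 + 2 * s).
have a_gt0 : 0 < a by rewrite invr_gt0.
have a2_gt0 : 0 < 2 * a by rewrite mulr_gt0.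
have a_le : a <= 4 / 3 by rewrite /a -div1r ler_pdivrMr //; lra.
have fa_le : L * f a <= f (2 * a) by apply: f_gc; rewrite ger0_norm; lra.
have r_ge0 : 0 <= r by lra.
have rT_ge0 : 0 <= r * T by rewrite mulr_ge0 // ltW.
have rT_le1 : r * T <= 1 by nra.
have f2a_ge0 := f_ge0 (2 * a).
have key : (1 + s) * ((1 - r * T) * f (2 * a)) <= (1 + 2 * s) * f b.
  have [s_le0 | s_gt0] := lerP s 0.
    have a2_le_b : 2 * a <= b.
      by rewrite /b /a ler_pdivlMr // mulrAC ler_pdivrMr //; lra.
    have slope := convex0_slope_le f_cvx f0 (ltW a2_gt0) a2_le_b.
    apply: (@le_trans _ _ ((1 + s) * f (2 * a))).
      by apply: ler_wpM2l; [exact: ltW | rewrite ler_piMl //; lra].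
    have -> : (1 + s) * f (2 * a) = (1 + s) * (1 + 2 * s) / 2 * (b * f (2 * a)).
      by rewrite /b; field; rewrite lt0r_neq0.
    have -> : (1 + 2 * s) * f b = (1 + s) * (1 + 2 * s) / 2 * (2 * a * f b).
      by rewrite /a; field; rewrite lt0r_neq0.
    by rewrite ler_wpM2l // divr_ge0 // mulr_ge0 // ltW.
  (* For [s > 0], the chord through [b < 2 a < 4 a] and doubling at [2 a] bound
     the drop from [f (2 a)] to [f b]. *)
  have b_le_2a : b <= 2 * a.
    by rewrite /b /a ler_pdivrMr // mulrAC ler_pdivlMr //; lra.
  have cvx : (4 * a - b) * f (2 * a) <= (4 * a - 2 * a) * f b + (2 * a - b) * f (4 * a).
    by apply: f_cvx => //; lra.
  have f4a : f (4 * a) <= T * f (2 * a).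
    rewrite (_ : 4 * a = 2 * (2 * a)); last by ring.
    by apply: f_dbl; rewrite ger0_norm; lra.
  have gap : 2 * a - b <= 2 * a * r.
    have -> : 2 * a - b = 2 * a * (s / (1 + 2 * s)).
      by rewrite /a /b; field; rewrite !lt0r_neq0.
    by apply: ler_wpM2l; [lra | rewrite ler_pdivrMr //; nra].
  have fb_ge : (1 - r * T) * f (2 * a) <= f b.
    rewrite -(ler_pM2l a2_gt0).
    have T_f2a_ge0 : 0 <= T * f (2 * a) by rewrite mulr_ge0 // ltW.
    have s1 : (2 * a - b) * f (4 * a) <= (2 * a - b) * (T * f (2 * a)).
      by apply: ler_wpM2l => //; lra.
    have s2 : (2 * a - b) * (T * f (2 * a)) <= 2 * a * r * (T * f (2 * a)).
      exact: ler_wpM2r.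
    have s3 : 2 * a * f (2 * a) <= (4 * a - b) * f (2 * a) by apply: ler_wpM2r => //; lra.
    lra.
  apply: (@le_trans _ _ ((1 + s) * f b)); first by apply: ler_wpM2l => //; exact: ltW.
  by apply: ler_wpM2r; [exact: f_ge0 | lra].
apply: (@le_trans _ _ ((1 + s) * ((1 - r * T) * (L * f a)))).
  rewrite mulrCA; apply: ler_wpM2l; first exact: ltW.
  by rewrite [X in _ <= X]mulrA; apply: ler_wpM2r; [exact: f_ge0 | nra].
apply: le_trans key; apply: ler_wpM2l; first exact: ltW.
by apply: ler_wpM2l; first lra.
Qed.

Lemma perspective_balanced K s : 0 <= K ->
  (forall t, `|t| <= 3 -> f t <= K * f (- t)) -> `|s| <= 1/4 ->
  (1 + s) * f (1 + s)^-1 <= (1 + 2 * K * T) * ((1 - s) * f (- (1 - s)^-1)).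
Proof.
move=> K_ge0 f_bal; rewrite ler_norml => /andP [s_lo s_hi].
have c1 : 0 < 1 + s by lra.
have c2 : 0 < 1 - s by lra.
set a := (1 + s)^-1; set e := (1 - s)^-1.
have a_ge0 : 0 <= a by rewrite invr_ge0 ltW.
have e_ge0 : 0 <= e by rewrite invr_ge0 ltW.
have a_le : a <= 4 / 3 by rewrite /a -div1r ler_pdivrMr //; lra.
have e_le : e <= 4 / 3 by rewrite /e -div1r ler_pdivrMr //; lra.
have a_le_2e : a <= 2 * e by rewrite /a /e -div1r ler_pdivrMr // mulrAC ler_pdivlMr //; lra.
have fa_le : f a <= K * T * f (- e).
  apply: le_trans (f_bal _ _) _; first by rewrite ger0_norm; lra.
  rewrite -mulrA; apply: ler_wpM2l => //.
  apply: le_trans (convex0_nonincr a_ge0 a_le_2e) _.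
  by rewrite -mulrN f_dbl // normrN ger0_norm; lra.
have fe_ge0 := f_ge0 (- e).
apply: (@le_trans _ _ ((1 + s) * (K * T * f (- e)))).
  by apply: ler_wpM2l => //; exact: ltW.
rewrite mulrA [X in _ <= X]mulrA; apply: ler_wpM2r => //.
have KT_ge0 : 0 <= K * T by rewrite mulr_ge0 // ltW.
nra.
Qed.

End Perspective.

Section Dotp.
Variables (R : realType) (n : nat).
Implicit Types (u v w : 'rV[R]_n).

Lemma dotpDl u v w : dotp (u + v) w = dotp u w + dotp v w.
Proof. by rewrite /dotp -big_split; apply: eq_bigr => i _; rewrite mxE mulrDl. Qed.

Lemma dotpZl (a : R) u w : dotp (a *: u) w = a * dotp u w.
Proof. by rewrite /dotp mulr_sumr; apply: eq_bigr => i _; rewrite mxE mulrA. Qed.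

Lemma dotpNl u w : dotp (- u) w = - dotp u w.
Proof. by rewrite -scaleN1r dotpZl mulN1r. Qed.

End Dotp.

Section Gradient.
Variables (R : realType) (n : nat) (nrm : 'rV[R]_n -> R) (N : 'rV[R]_n -> 'rV[R]_n).
Hypotheses (nrm_norm : is_norm nrm) (N_grad : is_gradient nrm N).
Local Notation h := (hfun nrm N).

Lemma nrm_ge0 x : 0 <= nrm x. Proof. by case: nrm_norm. Qed.

Lemma nrmZ a x : nrm (a *: x) = `|a| * nrm x. Proof. by case: nrm_norm. Qed.

Lemma nrmD_le x y : nrm (x + y) <= nrm x + nrm y. Proof. by case: nrm_norm. Qed.

Lemma nrmN x : nrm (- x) = nrm x.
Proof. by rewrite -scaleN1r nrmZ normrN normr1 mul1r. Qed.

Lemma nrm_gt0 x : x != 0 -> 0 < nrm x.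
Proof.
move=> x0; rewrite lt_neqAle nrm_ge0 andbT eq_sym.
by apply: contra x0 => /eqP; case: nrm_norm => _ nrm0 _ _ /nrm0 ->.
Qed.

Section AtPoint.
Variable x : 'rV[R]_n.
Hypothesis x_neq0 : x != 0.

Lemma dotp_gradient_le z : dotp z (N x) <= nrm z.
Proof.
have [nrm_diff dE] := N_grad x_neq0.
rewrite -dE -deriveE // /derive; apply: limr_le; first exact: diff_derivable.
near=> t; have t_neq0 : t != 0 by near: t; exact: nbhs_dnbhs_neq.
have incr : `|nrm (t *: z + x) - nrm x| <= `|t| * nrm z.
  have := nrmD_le (t *: z) x; have := nrmD_le (- (t *: z)) (t *: z + x).
  rewrite addKr nrmN nrmZ ler_norml; lra.
apply: le_trans (ler_norm _) _ => /=.
by rewrite normrZ normfV ler_pdivrMl ?normr_gt0.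
Unshelve. all: by end_near.
Qed.

Lemma dotp_gradient_self : dotp x (N x) = nrm x.
Proof.
apply/le_anti; rewrite dotp_gradient_le /=.
have [nrm_diff dE] := N_grad x_neq0.
rewrite -dE -deriveE // /derive; apply: limr_ge; first exact: diff_derivable.
near=> t; have t_neq0 : t != 0 by near: t; exact: nbhs_dnbhs_neq.
have t_lt1 : `|t| < 1.
  by near: t; apply: nbhs_dnbhs; exact: (@nbhs0_lt R R 1 ltr01).
rewrite /= (_ : t *: x + x = (t + 1) *: x); last by rewrite scalerDl scale1r.
rewrite nrmZ ger0_norm; last by move: t_lt1; rewrite ltr_norml; lra.
by rewrite mulrDl mul1r addrK -[t^-1 *: _]/(t^-1 * _) mulKf.
Unshelve. all: by end_near.
Qed.

Lemma hfun_ge0 z : 0 <= h x z.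
Proof. by rewrite /hfun subr_ge0 dotp_gradient_le. Qed.

Lemma hfun_self : h x x = 0.
Proof. by rewrite /hfun dotp_gradient_self subrr. Qed.

Lemma hfunZ c z : 0 <= c -> h x (c *: z) = c * h x z.
Proof. by move=> c_ge0; rewrite /hfun nrmZ dotpZl ger0_norm // mulrBr. Qed.

Lemma hfunD_le z1 z2 : h x (z1 + z2) <= h x z1 + h x z2.
Proof. by rewrite /hfun dotpDl; have := nrmD_le z1 z2; lra. Qed.

Lemma hfun_line_convex w : chord_convex (fun t => h x (x + t *: w)).
Proof.
move=> p q u pq qu.
have comb : (u - p) *: (x + q *: w) = (u - q) *: (x + p *: w) + (q - p) *: (x + u *: w).
  by rewrite !scalerDr !scalerA addrACA -!scalerDl; congr (_ *: _ + _ *: _); ring.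
have := hfunD_le ((u - q) *: (x + p *: w)) ((q - p) *: (x + u *: w)).
by rewrite -comb !hfunZ ?subr_ge0 // (le_trans pq qu).
Qed.

Lemma hfun_shift w c s : 0 < 1 + c * s ->
  h x (x + c *: (s *: x + w)) = (1 + c * s) * h x (x + (c / (1 + c * s)) *: w).
Proof.
move=> pos; rewrite -hfunZ ?ltW //; congr (h x _).
rewrite !scalerDr !scalerA [(1 + c * s) * _]mulrC divfK ?gt_eqF //.
by rewrite scalerDl scale1r addrA.
Qed.

Lemma hfun_shift1 w s : 0 < 1 + s ->
  h x (x + (s *: x + w)) = (1 + s) * h x (x + (1 + s)^-1 *: w).
Proof.
by move=> pos; have := hfun_shift w (c := 1) (s := s); rewrite scale1r !mul1r; apply.
Qed.

Lemma hfun_shiftN w s : 0 < 1 - s ->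
  h x (x - (s *: x + w)) = (1 - s) * h x (x + (- (1 - s)^-1) *: w).
Proof.
by move=> pos; have := hfun_shift w (c := -1) (s := s); rewrite scaleN1r !mulN1r; apply.
Qed.

Lemma tangent_decomposition y rho : 0 <= rho -> nrm y <= rho * nrm x ->
  exists s w, [/\ `|s| <= rho, dotp w (N x) = 0, nrm w <= 2 * rho * nrm x & y = s *: x + w].
Proof.
move=> rho_ge0 y_small; have x_gt0 := nrm_gt0 x_neq0.
set s := dotp y (N x) / nrm x.
have s_small : `|s| <= rho.
  rewrite normrM normfV (gtr0_norm x_gt0) ler_pdivrMr // ler_norml.
  have := dotp_gradient_le y; have := dotp_gradient_le (- y).
  by rewrite dotpNl nrmN; lra.
exists s, (y - s *: x); split => //; last by rewrite addrC subrK.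
  by rewrite dotpDl dotpNl dotpZl dotp_gradient_self divfK ?gt_eqF // subrr.
apply: le_trans (nrmD_le _ _) _; rewrite nrmN nrmZ.
have : `|s| * nrm x <= rho * nrm x by rewrite ler_wpM2r // nrm_ge0.
lra.
Qed.

Lemma hfun_line0 w : h x (x + 0 *: w) = 0.
Proof. by rewrite scale0r addr0 hfun_self. Qed.

Lemma tangent_on_line (P : 'rV[R]_n -> Prop) r rho w : 0 <= rho -> 6 * rho <= r ->
  (forall y, nrm y <= r * nrm x -> dotp y (N x) = 0 -> P y) ->
  dotp w (N x) = 0 -> nrm w <= 2 * rho * nrm x -> forall t, `|t| <= 3 -> P (t *: w).
Proof.
move=> rho_ge0 rho_le HP w_tan w_small t t_le; apply: HP; last by rewrite dotpZl w_tan mulr0.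
rewrite nrmZ; have := nrm_ge0 x; have := nrm_ge0 w; have := normr_ge0 t; nra.
Qed.

Lemma doubling_tangent_on_line T r rho w :
  (forall y, nrm y <= r * nrm x -> dotp y (N x) = 0 -> h x (x + 2 *: y) <= T * h x (x + y)) ->
  0 <= rho -> 6 * rho <= r -> dotp w (N x) = 0 -> nrm w <= 2 * rho * nrm x ->
  forall t, `|t| <= 3 -> h x (x + (2 * t) *: w) <= T * h x (x + t *: w).
Proof.
move=> HT rho_ge0 rho_le w_tan w_small t; rewrite -scalerA; move: t.
exact: (tangent_on_line (P := fun v => h x (x + 2 *: v) <= T * h x (x + v))) HT w_tan w_small.
Qed.

End AtPoint.

Lemma doubling_of_tangent : doubling_tangent nrm N -> doubling nrm N.
Proof.
case=> T [r [T_gt0 r_gt0 HT]].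
pose rho := Num.min (1/4) (r / 6).
have rho_gt0 : 0 < rho by rewrite lt_min; apply/andP; split; lra.
have rho_le4 : rho <= 1/4 by rewrite ge_min lexx.
have rho_le6 : 6 * rho <= r.
  suff : rho <= r / 6 by lra.
  by rewrite ge_min lexx orbT.
exists (2 * T ^+ 2), rho; split=> [|//|x y x_neq0 y_small].
  by rewrite mulr_gt0 ?exprn_gt0.
have [s [w [s_small w_tan w_small ->]]] := tangent_decomposition x_neq0 (ltW rho_gt0) y_small.
have f_dbl := doubling_tangent_on_line (HT x ^~ x_neq0) (ltW rho_gt0) rho_le6 w_tan w_small.
have s_le := le_trans s_small rho_le4.
have /andP [s_lo s_hi] : - (1/4) <= s <= 1/4 by rewrite -ler_norml.
rewrite hfun_shift1 ?hfun_shift; [|lra..].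
exact: (perspective_doubling (hfun_line_convex x w) (hfun_line0 x_neq0 w)
  (fun t => hfun_ge0 x_neq0 _) T_gt0 f_dbl s_le).
Qed.

Lemma geom_convex_of_tangent :
  doubling_tangent nrm N -> geom_convex_tangent nrm N -> geom_convex nrm N.
Proof.
case=> T [r [T_gt0 r_gt0 HT]] [L [r' [L_gt2 r'_gt0 HG]]].
pose rho := Num.min (Num.min (1/4) (r / 6)) (Num.min (r' / 6) ((L - 2) / (2 * L * T))).
have rho_gt0 : 0 < rho.
  by rewrite !lt_min !divr_gt0 ?mulr_gt0 //; lra.
have rho_le4 : rho <= 1/4 by rewrite !ge_min lexx.
have rho_le6 : 6 * rho <= r.
  suff : rho <= r / 6 by lra.
  by rewrite !ge_min lexx !orbT.
have rho_le6' : 6 * rho <= r'.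
  suff : rho <= r' / 6 by lra.
  by rewrite !ge_min lexx !orbT.
have rho_LT : 2 * L * rho * T <= L - 2.
  have : rho <= (L - 2) / (2 * L * T) by rewrite !ge_min lexx !orbT.
  by rewrite ler_pdivlMr ?mulr_gt0 //; lra.
exists rho, ((L + 2) / 2); split=> [//||x y x_neq0 y_small]; first lra.
have [s [w [s_small w_tan w_small ->]]] := tangent_decomposition x_neq0 (ltW rho_gt0) y_small.
have f_dbl := doubling_tangent_on_line (HT x ^~ x_neq0) (ltW rho_gt0) rho_le6 w_tan w_small.
have f_gc : forall t, `|t| <= 3 -> L * h x (x + t *: w) <= h x (x + (2 * t) *: w).
  move=> t; rewrite -scalerA; move: t.
  apply: (tangent_on_line (P := fun v => L * h x (x + v) <= h x (x + 2 *: v)))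
    (ltW rho_gt0) rho_le6' _ w_tan w_small.
  by move=> v; apply: HG.
have /andP [s_lo s_hi] : - (1/4) <= s <= 1/4 by rewrite -ler_norml (le_trans s_small).
rewrite hfun_shift1 ?hfun_shift; [|lra..].
exact: (perspective_geom_convex (hfun_line_convex x w) (hfun_line0 x_neq0 w)
  (fun t => hfun_ge0 x_neq0 _) T_gt0 f_dbl f_gc (ltW L_gt2) rho_le4 rho_LT s_small).
Qed.

Lemma balanced_of_tangent :
  doubling_tangent nrm N -> balanced_tangent nrm N -> balanced nrm N.
Proof.
case=> T [r [T_gt0 r_gt0 HT]] [r' [K [r'_gt0 K_gt0 HB]]].
pose rho := Num.min (Num.min (1/4) (r / 6)) (r' / 6).
have rho_gt0 : 0 < rho by rewrite !lt_min; lra.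
have rho_le4 : rho <= 1/4 by rewrite !ge_min lexx.
have rho_le6 : 6 * rho <= r.
  suff : rho <= r / 6 by lra.
  by rewrite !ge_min lexx !orbT.
have rho_le6' : 6 * rho <= r'.
  suff : rho <= r' / 6 by lra.
  by rewrite !ge_min lexx !orbT.
exists rho, (1 + 2 * K * T); split=> [//||x y x_neq0 y_small].
  suff : 0 < 2 * K * T by lra.
  by rewrite !mulr_gt0.
have [s [w [s_small w_tan w_small ->]]] := tangent_decomposition x_neq0 (ltW rho_gt0) y_small.
have f_dbl := doubling_tangent_on_line (HT x ^~ x_neq0) (ltW rho_gt0) rho_le6 w_tan w_small.
have f_bal : forall t, `|t| <= 3 -> h x (x + t *: w) <= K * h x (x + (- t) *: w).
  move=> t; rewrite scaleNr; move: t.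
  apply: (tangent_on_line (P := fun v => h x (x + v) <= K * h x (x - v)))
    (ltW rho_gt0) rho_le6' _ w_tan w_small.
  by move=> v; apply: HB.
have s_le := le_trans s_small rho_le4.
have /andP [s_lo s_hi] : - (1/4) <= s <= 1/4 by rewrite -ler_norml.
rewrite hfun_shift1 ?hfun_shiftN; [|lra..].
exact: (perspective_balanced (hfun_line_convex x w) (hfun_line0 x_neq0 w)
  (fun t => hfun_ge0 x_neq0 _) T_gt0 f_dbl (ltW K_gt0) f_bal s_le).
Qed.

End Gradient.

Unset Implicit Arguments.

Theorem theorem6p5 (R : realType) (n : nat)
  (nrm : 'rV[R]_n -> R) (N : 'rV[R]_n -> 'rV[R]_n) :
  is_norm nrm -> strictly_convex nrm -> C1_away_from_0 nrm N ->
  [/\ doubling_tangent nrm N -> doubling nrm N,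
      doubling_tangent nrm N -> geom_convex_tangent nrm N -> geom_convex nrm N
    & doubling_tangent nrm N -> balanced_tangent nrm N -> balanced nrm N].
Proof.
move=> nrm_norm _ [N_grad _]; split.
- exact: doubling_of_tangent.
- exact: geom_convex_of_tangent.
- exact: balanced_of_tangent.
Qed.
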